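(* There is an absolute constant $C>0$ such that the following holds. Let $B=(U\cup V,E)$ be a bipartite graph with $n\ge2$ nodes in which every node of $U$ has degree at least $d$ and every node of $V$ has degree at most $f<d$. Let $M$ be any matching of $B$ and let $s\in U$ be a node not matched by $M$. Then there is an augmenting path for $M$ starting at $s$ of length at most $C\,d\log n$.
   Context: An augmenting path for a matching $M$ is a path whose edges alternate between edges not in $M$ and edges in $M$, and whose two endpoints are both unmatched by $M$ (so it starts and ends with non-$M$ edges). *)

From HB Require Import structures.
From mathcomp Require Import all_boot.
From Stdlib Require Import Reals.
Set Implicit Arguments. Unset Strict Implicit. Unset Printing Implicit Defensive.

Section Graphs.
Variable T : finType.

Definition bipartite_graph (inU : pred T) (e : rel T) : Prop :=
  [/\ irreflexive e, symmetric e & forall x y, e x y -> inU x != inU y].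

Definition deg (e : rel T) (x : T) : nat := #|[set y | e x y]|.

Definition is_matching (e M : rel T) : Prop :=
  [/\ forall x y, M x y -> e x y, symmetric M &
      forall x y z, M x y -> M x z -> y = z].

Definition matched (M : rel T) (x : T) : bool := [exists y, M x y].

(* The path s :: p (vertices s = p_0, p_1, ..., p_k with k = size p edges)
   is an augmenting path for M starting at s: a (simple) path in e with at
   least one edge, whose edges alternate non-M, M, non-M, ..., and whose two
   endpoints are unmatched by M. *)
Definition augmenting_path (e M : rel T) (s : T) (p : seq T) : Prop :=
  [/\ path e s p, uniq (s :: p), 0 < size p,
      (forall i, i < size p ->
         M (nth s (s :: p) i) (nth s (s :: p) i.+1) = odd i) &
      ~~ matched M s /\ ~~ matched M (last s p)].
End Graphs.

(* Let [reach k] be the set of nodes of [U] that end an even alternating path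
   of length at most [2k] from [s].  If no augmenting path of length at most
   [2k+1] exists, every neighbour of [reach k] is matched, and appending the
   neighbour and its mate to such a path (or cutting the path where it meets
   the mate) shows that the mate lies in [reach (k+1)].  Mates are distinct,
   so counting the edges leaving [reach k] gives
   [(f+1) |reach k| <= d |reach k| <= f |N(reach k)| <= f |reach (k+1)|].
   Hence [|reach k| >= (1 + 1/f)^k], which exceeds [n] for [k = f log2 n + 1]
   because [(1 + 1/f)^f >= 2]. *)
From mathcomp Require Import all_boot zify.
From Stdlib Require Import ClassicalEpsilon.
Set Implicit Arguments. Unset Strict Implicit. Unset Printing Implicit Defensive.

Lemma deg_sum (T : finType) (e : rel T) x (N : {set T}) :
  (forall y, e x y -> y \in N) -> deg e x = \sum_(y in N) e x y.
Proof.
move=> sub; rewrite /deg -sum1_card big_mkcond [RHS]big_mkcond /=.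
apply: eq_bigr => y _; rewrite inE.
by case exy: (e x y); rewrite ?(sub _ exy) //; case: (y \in N).
Qed.

Lemma sum_le_deg (T : finType) (e : rel T) x (A : {set T}) :
  \sum_(y in A) e x y <= deg e x.
Proof.
rewrite /deg -sum1_card big_mkcond [X in _ <= X]big_mkcond /=.
by apply: leq_sum => y _; rewrite inE; case: (y \in A); case: (e x y).
Qed.

Lemma double_count_deg (T : finType) (e : rel T) (A N : {set T}) d f :
  symmetric e ->
  {in A, forall u, d <= deg e u} -> {in N, forall v, deg e v <= f} ->
  (forall u v, u \in A -> e u v -> v \in N) ->
  d * #|A| <= f * #|N|.
Proof.
move=> esym degA degN AN.
have lowA : d * #|A| <= \sum_(u in A) \sum_(v in N) e u v.
  rewrite mulnC -sum_nat_const; apply: leq_sum => u uA.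
  rewrite -deg_sum; [exact: degA | by move=> v; apply: AN].
have upN : \sum_(v in N) \sum_(u in A) e v u <= f * #|N|.
  rewrite mulnC -sum_nat_const; apply: leq_sum => v vN.
  exact: leq_trans (sum_le_deg _ _ _) (degN _ vN).
rewrite exchange_big /= in lowA; apply: leq_trans lowA _.
by under eq_bigr => v _ do under eq_bigr => u _ do rewrite esym.
Qed.

Lemma expn_bernoulli f a : f ^ a * (f + a) <= f * (f + 1) ^ a.
Proof.
elim: a => [|a IH]; first by rewrite addn0 muln1 mul1n.
have step : f * (f + a.+1) <= (f + 1) * (f + a) by nia.
rewrite !expnS; move: IH step; set X := f ^ a; set Y := (f + 1) ^ a; nia.
Qed.

Lemma expn_gap f m n : n < 2 ^ m -> f ^ (f * m).+1 * n < (f + 1) ^ (f * m).+1.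
Proof.
move=> n_lt; have [-> | f_gt0] := posnP f; first by rewrite exp0n.
have two_pow : 2 * f ^ f <= (f + 1) ^ f.
  rewrite -(leq_pmul2l f_gt0); apply: leq_trans (expn_bernoulli f f); nia.
have pow_m : 2 ^ m * f ^ (f * m) <= (f + 1) ^ (f * m).
  rewrite !expnM -expnMn; have [-> // | m_gt0] := posnP m.
  by rewrite leq_exp2r.
have X_gt0 : 0 < f ^ (f * m) by rewrite expn_gt0 f_gt0.
have : f ^ (f * m) * n.+1 <= (f + 1) ^ (f * m).
  by apply: leq_trans pow_m; rewrite mulnC leq_mul2r n_lt orbT.
rewrite !expnS; move: X_gt0; set X := f ^ (f * m); set Y := (f + 1) ^ (f * m).
nia.
Qed.

Section Bipartite.
Variables (T : finType) (inU : pred T) (e : rel T).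
Hypothesis bip : bipartite_graph inU e.

Lemma bipartite_edge_inU u v : e u v -> inU v = ~~ inU u.
Proof. by case: bip => _ _ h /h; case: (inU u); case: (inU v). Qed.

Lemma path_inU_nth x p i :
  path e x p -> i <= size p -> inU (nth x (x :: p) i) = inU x (+) odd i.
Proof.
elim: p x i => [|y p IH] x [|i] //=; rewrite ?addbF // => /andP[exy yp] ip.
rewrite (set_nth_default y) // IH // (bipartite_edge_inU exy).
by case: (inU x); case: (odd i).
Qed.
End Bipartite.

Section Alternating.
Variables (T : finType) (inU : pred T) (e M : rel T) (s : T).
Hypotheses (bip : bipartite_graph inU e) (matchM : is_matching e M)
  (sU : inU s) (s_free : ~~ matched M s).

Lemma matching_edge x y : M x y -> e x y.
Proof. by case: matchM => h _ _; apply: h. Qed.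

Lemma matching_sym x y : M x y -> M y x.
Proof. by case: matchM => _ h _; rewrite h. Qed.

Lemma matching_uniq x y z : M x y -> M x z -> y = z.
Proof. by case: matchM => _ _ h; apply: h. Qed.

Lemma matchedI x y : M x y -> matched M x.
Proof. by move=> xy; apply/existsP; exists y. Qed.

Definition alternating (p : seq T) : Prop :=
  [/\ path e s p, uniq (s :: p) &
      forall i, i < size p -> M (nth s (s :: p) i) (nth s (s :: p) i.+1) = odd i].

Lemma alternating_inU p i :
  alternating p -> i <= size p -> inU (nth s (s :: p) i) = ~~ odd i.
Proof. by case=> sp _ _ ip; rewrite (path_inU_nth bip) // sU. Qed.

Lemma alternating_last_inU p :
  alternating p -> ~~ odd (size p) -> inU (last s p).
Proof. by move=> altp ev; rewrite (last_nth s) alternating_inU. Qed.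

Lemma alternating_take p i : alternating p -> alternating (take i p).
Proof.
case=> sp up altp; have take_cons : s :: take i p = take i.+1 (s :: p) by [].
split; first exact: take_path.
  by rewrite take_cons take_uniq.
move=> j; rewrite size_take_min ltn_min => /andP[ji jp].
by rewrite take_cons !nth_take ?altp ?ltnS // ltnW.
Qed.

Lemma alternating_rcons p v :
  alternating p -> e (last s p) v -> v \notin s :: p ->
  M (last s p) v = odd (size p) -> alternating (rcons p v).
Proof.
case=> sp up altp ev vp Mv; split.
- by rewrite rcons_path sp.
- by rewrite -rcons_cons rcons_uniq vp.
move=> i; rewrite size_rcons ltnS leq_eqVlt -!rcons_cons !nth_rcons /= !ltnS.
case/orP=> [/eqP ->|ip]; last by rewrite ip ltnW // altp.
by rewrite leqnn ltnn eqxx -(last_nth s).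
Qed.

Lemma alternating_augmenting p :
  alternating p -> 0 < size p -> ~~ matched M (last s p) ->
  augmenting_path e M s p.
Proof. by case=> sp up altp p0 lfree; split. Qed.

Lemma alternating_mate p x :
  alternating p -> ~~ odd (size p) -> x \in p -> exists2 y, y \in p & M x y.
Proof.
case=> _ _ altp ev xp; set i := index x p.
(* [x] is vertex [i.+1] of [s :: p]: its matching edge on the path goes
   backwards if [i] is odd and forwards if [i] is even. *)
have ip : i < size p by rewrite index_mem.
have xE : nth s p i = x := nth_index s xp.
have [oi|ei] := boolP (odd i).
  have i0 : 0 < i by case: (i) oi.
  exists (nth s p i.-1); first by rewrite mem_nth // (leq_ltn_trans (leq_pred i)).
  by apply: matching_sym; have := altp i ip; rewrite oi -xE; case: (i) i0.
have iS : i.+1 < size p.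
  by rewrite ltn_neqAle ip andbT; apply: contra ev => /eqP <-; rewrite /= ei.
exists (nth s p i.+1); first exact: mem_nth.
by have := altp i.+1 iS; rewrite /= ei xE.
Qed.

Lemma alternating_mate_mem p x y :
  alternating p -> ~~ odd (size p) -> x \in s :: p -> M x y -> y \in p.
Proof.
move=> altp ev; rewrite in_cons => /orP[/eqP -> /matchedI | xp xy].
  by rewrite (negbTE s_free).
by have [z zp xz] := alternating_mate altp ev xp; rewrite (matching_uniq xy xz).
Qed.

Lemma alternating_last_nbr p v :
  alternating p -> ~~ odd (size p) -> e (last s p) v -> inU v = false /\ v != s.
Proof.
move=> altp ev lv; have vV : inU v = false.
  by rewrite (bipartite_edge_inU bip lv) alternating_last_inU.
by split=> //; apply/eqP=> vs; move: vV; rewrite vs sU.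
Qed.

Lemma augmenting_rcons p v :
  alternating p -> ~~ odd (size p) -> e (last s p) v -> ~~ matched M v ->
  augmenting_path e M s (rcons p v).
Proof.
move=> altp ev lv vfree; have [_ vs] := alternating_last_nbr altp ev lv.
apply: alternating_augmenting; rewrite ?size_rcons ?last_rcons //.
apply: alternating_rcons => //.
  rewrite in_cons negb_or vs /=; apply: contra vfree => vp.
  by have [y _ /matchedI] := alternating_mate altp ev vp.
by rewrite (negbTE ev); apply: contraNF vfree => /matching_sym/matchedI.
Qed.

Lemma alternating_extend p v w :
  alternating p -> ~~ odd (size p) -> e (last s p) v -> M v w ->
  (exists q, [/\ alternating q, ~~ odd (size q), size q <= size p & last s q = w])
  \/ alternating (rcons (rcons p v) w).
Proof.
move=> altp ev lv vw; have [vV vs] := alternating_last_nbr altp ev lv.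
have wU : inU w by rewrite (bipartite_edge_inU bip (matching_edge vw)) vV.
have [vp | vNp] := boolP (v \in p).
  left; set q := take (index w p).+1 p.
  have wp : w \in p by apply: alternating_mate_mem altp ev _ vw; rewrite inE vp orbT.
  have szq : size q = (index w p).+1 by rewrite size_takel ?index_mem.
  have lastq : last s q = w by rewrite (last_nth s) szq /= nth_take ?nth_index.
  have altq : alternating q := alternating_take _ altp.
  exists q; split=> //; last by rewrite szq index_mem.
  have := alternating_inU altq (leqnn _).
  by rewrite -(last_nth s) lastq wU => <-.
right; have vNsp : v \notin s :: p by rewrite in_cons negb_or vs.
have wNsp : w \notin s :: p.
  rewrite in_cons negb_or; apply/andP; split.
    by apply: contraNneq s_free => <-; apply: matchedI (matching_sym vw).
  apply: contra vNp => wp; apply: alternating_mate_mem altp ev _ (matching_sym vw).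
  by rewrite inE wp orbT.
have lv_free : M (last s p) v = false.
  by apply: contraNF vNp; apply: alternating_mate_mem altp ev (mem_last _ _).
have wv : w != v by apply: contraTneq wU => ->; rewrite vV.
apply: alternating_rcons; rewrite ?last_rcons ?size_rcons /=.
- by apply: alternating_rcons; rewrite ?lv_free ?(negbTE ev).
- exact: matching_edge.
- by rewrite -rcons_cons mem_rcons in_cons negb_or wv.
- by rewrite vw.
Qed.
End Alternating.

Definition asbool (P : Prop) : bool :=
  if excluded_middle_informative P then true else false.

Lemma asboolP (P : Prop) : asbool P <-> P.
Proof. by rewrite /asbool; case: excluded_middle_informative. Qed.

Section Reach.
Variables (T : finType) (inU : pred T) (e M : rel T) (s : T).
Hypotheses (bip : bipartite_graph inU e) (matchM : is_matching e M)
  (sU : inU s) (s_free : ~~ matched M s).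

Definition reach k : {set T} :=
  [set u | asbool (exists p, [/\ alternating e M s p, ~~ odd (size p),
                               size p <= k.*2 & last s p = u])].

Lemma reachP k u :
  u \in reach k <->
  exists p, [/\ alternating e M s p, ~~ odd (size p), size p <= k.*2 & last s p = u].
Proof. by rewrite inE asboolP. Qed.

Lemma source_in_reach k : s \in reach k.
Proof. by apply/reachP; exists [::]. Qed.

Lemma reach_inU k u : u \in reach k -> inU u.
Proof.
by case/reachP=> p [altp ev _ <-]; apply: (alternating_last_inU bip sU altp ev).
Qed.

Definition nbrs (A : {set T}) : {set T} := [set v | [exists u in A, e u v]].

(* Junk value: [mate v = v] when [v] is unmatched. *)
Definition mate (v : T) : T := odflt v [pick w | M v w].

Lemma mateP v : matched M v -> M v (mate v).
Proof.
by case/existsP=> w vw; rewrite /mate; case: pickP => [//|/(_ w)]; rewrite vw.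
Qed.

Variables d f : nat.
Hypotheses (degU : forall u, inU u -> d <= deg e u)
  (degV : forall v, ~~ inU v -> deg e v <= f).

Section NoShortPath.
Variable k : nat.
Hypothesis no_short : forall p, augmenting_path e M s p -> k.*2.+1 < size p.

Lemma reach_nbr_mate v :
  v \in nbrs (reach k) -> M v (mate v) /\ mate v \in reach k.+1.
Proof.
rewrite inE => /exists_inP[u /reachP[p [altp ev szp <-]] lv].
have vw : M v (mate v).
  apply/mateP/contraT => vfree.
  have := no_short (augmenting_rcons bip matchM sU s_free altp ev lv vfree).
  by rewrite size_rcons ltnS ltnNge szp.
split=> //; apply/reachP.
case: (alternating_extend bip matchM sU s_free altp ev lv vw).
  case=> q [altq evq szq lastq]; exists q; split=> //.
  by rewrite (leq_trans szq) // (leq_trans szp) // leq_double.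
move=> altr; exists (rcons (rcons p v) (mate v)).
by rewrite !size_rcons last_rcons doubleS !ltnS /= negbK.
Qed.

Lemma card_nbrs_reach : #|nbrs (reach k)| <= #|reach k.+1|.
Proof.
rewrite -(@card_in_imset _ _ mate); last first.
  move=> v1 v2 /reach_nbr_mate[vw1 _] /reach_nbr_mate[vw2 _] same.
  apply: (matching_uniq matchM (matching_sym matchM vw1)).
  by rewrite same; apply: (matching_sym matchM vw2).
by apply/subset_leq_card/subsetP=> _ /imsetP[v /reach_nbr_mate[_ wR] ->].
Qed.

Lemma reach_expansion : d * #|reach k| <= f * #|reach k.+1|.
Proof.
have [_ esym _] := bip.
apply: (leq_trans _ (leq_mul (leqnn f) card_nbrs_reach)).
apply: double_count_deg esym _ _ _.
- by move=> u /reach_inU /degU.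
- move=> v; rewrite inE => /exists_inP[u /reach_inU uU uv]; apply: degV.
  by rewrite (bipartite_edge_inU bip uv) uU.
- by move=> u v uR uv; rewrite inE; apply/exists_inP; exists u.
Qed.
End NoShortPath.

Hypothesis f_lt_d : f < d.

Lemma card_reach_lower K :
  (forall p, augmenting_path e M s p -> K.*2.+1 < size p) ->
  (f + 1) ^ K <= f ^ K * #|reach K|.
Proof.
move=> no_short.
suff grow k : k <= K -> (f + 1) ^ k <= f ^ k * #|reach k| by apply: grow.
elim: k => [_ | k IH kK].
  by rewrite mul1n card_gt0; apply/set0Pn; exists s; apply: source_in_reach.
have no_short_k p : augmenting_path e M s p -> k.*2.+1 < size p.
  by move/no_short; lia.
move: (IH (ltnW kK)) (reach_expansion no_short_k); rewrite !expnS.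
set X := f ^ k; set Y := (f + 1) ^ k; nia.
Qed.

Lemma short_augmenting_path :
  exists p, augmenting_path e M s p /\ size p <= (f * (trunc_log 2 #|T|).+1).+1.*2.+1.
Proof.
set K := (f * _).+1.
have [// | none] := excluded_middle_informative
  (exists p, augmenting_path e M s p /\ size p <= K.*2.+1).
have no_short p : augmenting_path e M s p -> K.*2.+1 < size p.
  by move=> augp; rewrite ltnNge; apply/negP=> short; apply: none; exists p.
have gap := expn_gap f (trunc_log_ltn #|T| (isT : 1 < 2)).
have := leq_trans (card_reach_lower no_short) (leq_mul (leqnn _) (max_card (reach K))).
by rewrite leqNgt gap.
Qed.
End Reach.

From Stdlib Require Import Reals Lra.

Lemma ln_le x y : (0 < x)%R -> (x <= y)%R -> (ln x <= ln y)%R.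
Proof. by move=> x_gt0 [xy | <-]; [left; apply: ln_increasing | right]. Qed.

Lemma INR_expn m n : INR (expn m n) = pow (INR m) n.
Proof. by elim: n => [|n IH] //=; rewrite expnS -multE mult_INR IH. Qed.

Lemma trunc_log2_succ_le_ln n : 2 <= n -> (INR (trunc_log 2 n).+1 <= 4 * ln (INR n))%R.
Proof.
move=> n_ge2; set t := trunc_log 2 n.
have n_ge2R : (2 <= INR n)%R by apply: (le_INR 2); apply/leP.
have ln2_le : (ln 2 <= ln (INR n))%R by apply: ln_le; lra.
have t_ln2_le : (INR t * ln 2 <= ln (INR n))%R.
  rewrite -ln_pow; last lra.
  apply: ln_le; first by apply: pow_lt; lra.
  rewrite -(INR_expn 2); apply/le_INR/leP/trunc_logP => //; exact: ltnW.
have := ln_lt_2; have := pos_INR t; rewrite S_INR; nra.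
Qed.

Theorem lemma3p3 :
  exists C : R, (0 < C)%R /\
  forall (T : finType) (inU : pred T) (e M : rel T) (d f : nat) (s : T),
    2 <= #|T| ->
    bipartite_graph inU e ->
    (forall u, inU u -> d <= deg e u) ->
    (forall v, ~~ inU v -> deg e v <= f) ->
    f < d ->
    is_matching e M ->
    inU s -> ~~ matched M s ->
    exists p : seq T, augmenting_path e M s p /\
      (INR (size p) <= C * INR d * ln (INR #|T|))%R.
Proof.
exists 20%R; split; first lra.
move=> T inU e M d f s n_ge2 bip degU degV f_lt_d matchM sU s_free.
have [p [augp szp]] := short_augmenting_path bip matchM sU s_free degU degV f_lt_d.
exists p; split=> //.
have t_le := trunc_log2_succ_le_ln n_ge2.
move: (trunc_log 2 #|T|) t_le szp => t t_le szp.
have size_le : size p <= 5 * d * t.+1 by nia.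
apply: Rle_trans (le_INR _ _ (elimT leP size_le)) _.
rewrite -!multE !mult_INR; have := pos_INR d; simpl (INR 5); nra.
Qed.
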